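(* For every $n\in\mathbb{N}$, with $d=\lfloor \frac{n-1}{2}\rfloor$, $$\iota^{d}(2^n-1)\leq n+\iota(n).$$
   Context: An addition chain producing $N$ is a sequence $1,2,s_3,\ldots,s_k=N$ in which every term after the first is the sum of two (not necessarily distinct) earlier terms; its length is the number of terms excluding the initial $1$; $\iota(N)$ is the length of the shortest addition chain producing $N$. An addition chain of degree $d$ producing $N$ is a sequence $1,2,s_3,\ldots,s_k=N$ (with $2=1+1$) in which each term $s_j$, $j\geq 3$, is the sum of at most $d$ earlier terms of the sequence; its length is again the number of terms excluding the initial $1$. $\iota^{d}(N)$ denotes the length of the shortest addition chain of degree $d$ producing $N$. $\lfloor\cdot\rfloor$ is the floor function. *)

From mathcomp Require Import all_boot.
Set Implicit Arguments. Unset Strict Implicit. Unset Printing Implicit Defensive.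

(* A sequence is represented by the list c = [:: s_1; s_2; ...; s_k] with
   s_1 = 1 (the initial 1).  Its length is the number of terms excluding the
   initial 1, i.e. (size c).-1.  It produces N when its last term is N. *)

Definition addition_chain (c : seq nat) : Prop :=
  nth 0 c 0 = 1 /\
  forall j, 0 < j < size c ->
    exists i l, i < j /\ l < j /\ nth 0 c j = nth 0 c i + nth 0 c l.

Definition addition_chain_deg (d : nat) (c : seq nat) : Prop :=
  nth 0 c 0 = 1 /\ 1 < size c /\ nth 0 c 1 = 2 /\
  forall j, 1 < j < size c ->
    exists idx : seq nat, 0 < size idx <= d /\ all (fun i => i < j) idx /\
      nth 0 c j = sumn (map (nth 0 c) idx).

Definition chain_length (c : seq nat) : nat := (size c).-1.

Definition produces (c : seq nat) (N : nat) : Prop := last 0 c = N.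

Definition is_iota (N m : nat) : Prop :=
  (exists c, addition_chain c /\ produces c N /\ chain_length c = m) /\
  (forall c, addition_chain c -> produces c N -> m <= chain_length c).

Definition is_iota_deg (d N m : nat) : Prop :=
  (exists c, addition_chain_deg d c /\ produces c N /\ chain_length c = m) /\
  (forall c, addition_chain_deg d c -> produces c N -> m <= chain_length c).

From mathcomp Require Import all_boot.
From mathcomp Require Import zify.
From Stdlib Require Import Classical.

Set Implicit Arguments.
Unset Strict Implicit.
Unset Printing Implicit Defensive.

(* Proof: for n >= 5 every ordinary chain producing n has length at least 3,
   because the k-th term of an addition chain is at most 2^k.  On the other
   side, doubling gives 1, 2, ..., 2^(n-1); then 2^a - 1 is a sum of a <= d
   of these powers, and 2^a - 1 grows to 2^b - 1 by adding the b - a <= d - 1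
   powers 2^a, ..., 2^(b-1).  Since n <= 2d + 2, four Mersenne numbers
   2^d - 1, ..., 2^n - 1 suffice, giving a degree-d chain of length n + 3,
   except for n = 6 (d = 2), where an explicit chain of length 8 is used. *)

Lemma exists_least_measure (T : Type) (P : T -> Prop) (f : T -> nat) x :
  P x -> exists m, (exists y, P y /\ f y = m) /\ (forall y, P y -> m <= f y).
Proof.
move=> Px; apply: NNPP => no_least.
suff lower : forall m y, P y -> m <= f y by have := lower (f x).+1 x Px; lia.
elim=> [//|m IHm] y Py.
case: (ltnP m (f y)) => // le_fy_m.
have fy_m : f y = m by have := IHm y Py; lia.
by exfalso; apply: no_least; exists m; split; [exists y | exact: IHm].
Qed.

Lemma is_iota_exists c N :
  addition_chain c -> produces c N -> exists m, is_iota N m.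
Proof.
move=> ac pr.
have [m [[c' [[ac' pr'] len']] least]] :=
  @exists_least_measure _ (fun c => addition_chain c /\ produces c N)
    chain_length c (conj ac pr).
by exists m; split; [exists c' | move=> c'' ac'' pr''; apply: least].
Qed.

Lemma is_iota_deg_exists d c N :
  addition_chain_deg d c -> produces c N -> exists m, is_iota_deg d N m.
Proof.
move=> ac pr.
have [m [[c' [[ac' pr'] len']] least]] :=
  @exists_least_measure _ (fun c => addition_chain_deg d c /\ produces c N)
    chain_length c (conj ac pr).
by exists m; split; [exists c' | move=> c'' ac'' pr''; apply: least].
Qed.

Lemma addition_chain_nth_le c j :
  addition_chain c -> j < size c -> nth 0 c j <= 2 ^ j.
Proof.
move=> [c0 c_sum]; elim/ltn_ind: j => [[|j]] IHj j_lt; first by rewrite c0.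
have [i [l [lt_i [lt_l ->]]]] := c_sum j.+1 ltac:(lia).
have le_pow k : k < j.+1 -> nth 0 c k <= 2 ^ j.
  by move=> lt_k; apply: leq_trans (IHj k lt_k _) _; rewrite ?leq_exp2l; lia.
by rewrite expnS; have := le_pow i lt_i; have := le_pow l lt_l; lia.
Qed.

Lemma addition_chain_produces_le c N :
  addition_chain c -> produces c N -> N <= 2 ^ chain_length c.
Proof.
rewrite /produces /chain_length => ac <-.
case: c ac => [|x c] ac //=.
by rewrite (last_nth 0); apply: addition_chain_nth_le.
Qed.

Lemma is_iota_ge N m : is_iota N m -> N <= 2 ^ m.
Proof.
by move=> [[c [ac [pr <-]]] _]; apply: addition_chain_produces_le.
Qed.

Lemma iota_addition_chain n :
  0 < n -> addition_chain (iota 1 n) /\ produces (iota 1 n) n.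
Proof.
move=> n_gt0; split; first split.
- by rewrite nth_iota.
- move=> j; rewrite size_iota => /andP[j_gt0 j_lt].
  by exists j.-1, 0; rewrite !nth_iota //; lia.
- by rewrite /produces -(nth_last 0) size_iota nth_iota; lia.
Qed.

Definition mersenne_chain (n : nat) (A : seq nat) : seq nat :=
  [seq 2 ^ k | k <- iota 0 n] ++ [seq 2 ^ a - 1 | a <- A].

Lemma size_mersenne_chain n A : size (mersenne_chain n A) = n + size A.
Proof. by rewrite size_cat !size_map size_iota. Qed.

Lemma nth_mersenne_chain_pow n A k :
  k < n -> nth 0 (mersenne_chain n A) k = 2 ^ k.
Proof.
move=> lt_kn.
by rewrite nth_cat size_map size_iota lt_kn (nth_map 0) ?nth_iota ?size_iota.
Qed.

Lemma nth_mersenne_chain_exp n A t :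
  t < size A -> nth 0 (mersenne_chain n A) (n + t) = 2 ^ nth 0 A t - 1.
Proof.
move=> lt_t.
by rewrite nth_cat size_map size_iota ltnNge leq_addr /= addKn (nth_map 0).
Qed.

Lemma sumn_pow2_iota a m :
  sumn [seq 2 ^ k | k <- iota a m] + 2 ^ a = 2 ^ (a + m).
Proof.
elim: m a => [|m IHm] a /=; first by rewrite addn0.
by rewrite -addSnnS -IHm expnS; lia.
Qed.

Lemma sumn_mersenne_chain_pows n A a m : a + m <= n ->
  sumn (map (nth 0 (mersenne_chain n A)) (iota a m)) + 2 ^ a = 2 ^ (a + m).
Proof.
move=> le_n; rewrite -sumn_pow2_iota; congr (sumn _ + _).
by apply/eq_in_map => k; rewrite mem_iota => k_in; apply: nth_mersenne_chain_pow; lia.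
Qed.

Section MersenneChain.

Variables (n d a0 : nat) (p : seq nat).
Hypotheses (n_ge2 : 2 <= n) (d_ge2 : 2 <= d) (a0_pos : 0 < a0 <= d).
Hypothesis le_n : all (leq^~ n) (a0 :: p).
Hypothesis step : path (fun a b => a <= b <= a + d.-1) a0 p.

Let A := a0 :: p.

Lemma mersenne_chain_step j : 1 < j < n + size A ->
  exists idx : seq nat, 0 < size idx <= d /\ all (fun i => i < j) idx /\
    nth 0 (mersenne_chain n A) j = sumn (map (nth 0 (mersenne_chain n A)) idx).
Proof.
move=> /andP[j_gt1 j_lt]; have nth_le_n t : t < size A -> nth 0 A t <= n.
  by move=> t_lt; apply: (allP le_n); rewrite mem_nth.
case: (ltnP j n) => [lt_jn | le_nj].
  exists [:: j.-1; j.-1]; split; first exact: d_ge2.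
  split; first by rewrite /= andbT; lia.
  rewrite /= !nth_mersenne_chain_pow; try lia.
  by rewrite -[in 2 ^ j](ltn_predK j_gt1) expnS; lia.
have -> : j = n + (j - n) by lia.
have : j - n < size A by lia.
case: (j - n) => [|t] t_lt; rewrite nth_mersenne_chain_exp //=.
  exists (iota 0 a0); split; first by rewrite size_iota.
  have a0_le_n : a0 <= n := nth_le_n 0 isT.
  split; first by apply/allP => k; rewrite mem_iota; lia.
  by have := @sumn_mersenne_chain_pows n A 0 a0 a0_le_n; rewrite expn0 add0n; lia.
have /andP[le_ab le_bd] := pathP 0 step t ltac:(done).
have b_le_n : nth 0 p t <= n := nth_le_n t.+1 t_lt.
set a := nth 0 A t in le_ab le_bd *; set b := nth 0 p t in le_ab le_bd b_le_n *.
exists ((n + t) :: iota a (b - a)); split; first by rewrite /= size_iota; lia.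
split.
  rewrite /= ltn_add2l ltnSn; apply/allP => k; rewrite mem_iota; lia.
rewrite /= nth_mersenne_chain_exp -/a; last lia.
have := @sumn_mersenne_chain_pows n A a (b - a) ltac:(lia).
have : 0 < 2 ^ a by rewrite expn_gt0.
rewrite subnKC //; lia.
Qed.

Lemma mersenne_chain_deg : addition_chain_deg d (mersenne_chain n A).
Proof.
split; first by rewrite nth_mersenne_chain_pow //; lia.
split; first by rewrite size_mersenne_chain; lia.
split; first by rewrite nth_mersenne_chain_pow.
by move=> j; rewrite size_mersenne_chain; apply: mersenne_chain_step.
Qed.

Lemma mersenne_chain_produces :
  produces (mersenne_chain n A) (2 ^ last a0 p - 1).
Proof.
rewrite /produces -(nth_last 0) size_mersenne_chain /= addnS /=.
by rewrite nth_mersenne_chain_exp // (last_nth 0).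
Qed.

End MersenneChain.

Definition chain63 : seq nat := [:: 1; 2; 3; 6; 12; 15; 30; 60; 63].

Lemma chain63_deg2 : addition_chain_deg 2 chain63.
Proof.
do 3 split => //; move=> [|[|[|[|[|[|[|[|[|j]]]]]]]]] //= _.
- by exists [:: 0; 1].
- by exists [:: 2; 2].
- by exists [:: 3; 3].
- by exists [:: 4; 2].
- by exists [:: 5; 5].
- by exists [:: 6; 6].
- by exists [:: 7; 2].
Qed.

Lemma deg_chain_pow2_sub1 n : 5 <= n ->
  exists c, addition_chain_deg ((n - 1) %/ 2) c /\ produces c (2 ^ n - 1) /\
    chain_length c <= n + 3.
Proof.
move=> n_ge5; case: (eqVneq n 6) => [-> | n_neq6].
  by exists chain63; split; first exact: chain63_deg2.
set d := (n - 1) %/ 2.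
have d_ge2 : 2 <= d by lia.
have n_le_2d2 : n <= 2 * d + 2 by lia.
have d2_n5 : d = 2 -> n = 5 by lia.
exists (mersenne_chain n [:: d; minn n (2 * d - 1); minn n (3 * d - 2); n]).
split; [|split].
- apply: mersenne_chain_deg; rewrite /= ?andbT; lia.
- exact: mersenne_chain_produces.
- by rewrite /chain_length size_mersenne_chain /=; lia.
Qed.

Theorem mainTheorem14 (n : nat) :
  2 <= (n - 1) %/ 2 ->
  exists k i, is_iota n i /\ is_iota_deg ((n - 1) %/ 2) (2 ^ n - 1) k /\
    k <= n + i.
Proof.
move=> d_ge2; have n_ge5 : 5 <= n by lia.
have [ac pr] := @iota_addition_chain n ltac:(lia).
have [i iota_n] := is_iota_exists ac pr.
have i_ge3 : 3 <= i.
  have : 2 ^ 2 < 2 ^ i by apply: leq_trans _ (is_iota_ge iota_n).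
  by rewrite ltn_exp2l.
have [c [cd [cp c_len]]] := deg_chain_pow2_sub1 n_ge5.
have [k iota_k] := is_iota_deg_exists cd cp.
exists k, i; split => //; split => //.
by have := iota_k.2 c cd cp; lia.
Qed.
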